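(* For any $k \ge 1$, the number of Grassmannian permutations of all sizes $m \ge 0$ (the empty permutation of size $0$ included) that avoid $\operatorname{id}_k = 12\cdots k$ is \[ \sum_{m=0}^{2k-2} |\mathcal{G}_m(\operatorname{id}_k)| = C_{k+1} - \binom{k}{2} - 1, \] and there are none of size $m \ge 2k-1$. Here $C_n=\frac{1}{n+1}\binom{2n}{n}$.
   Context: A permutation is Grassmannian if it has at most one descent (one-line notation). $\mathcal{G}_m(\operatorname{id}_k)$ denotes the set of Grassmannian permutations of $[m]$ that avoid (do not contain as an order-isomorphic subsequence) the identity permutation $12\cdots k$. *)

From mathcomp Require Import all_boot all_order all_fingroup.
Set Implicit Arguments. Unset Strict Implicit. Unset Printing Implicit Defensive.

Definition oneline (m : nat) (s : 'S_m) : seq nat :=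
  [seq val (s i) | i <- enum 'I_m].

Definition ndes (m : nat) (s : 'S_m) : nat :=
  let w := oneline s in count (fun i => nth 0 w i.+1 < nth 0 w i) (iota 0 m.-1).

Definition grassmannian (m : nat) (s : 'S_m) : bool := ndes s <= 1.

Definition contains (m k : nat) (s : 'S_m) (p : 'S_k) : bool :=
  [exists f : {ffun 'I_k -> 'I_m},
     [forall a : 'I_k, forall b : 'I_k,
        ((a < b) ==> (f a < f b)) && ((s (f a) < s (f b)) == (p a < p b))]].

Definition avoids (m k : nat) (s : 'S_m) (p : 'S_k) : bool := ~~ contains s p.

Definition id_perm (k : nat) : 'S_k := 1%g.

Definition Gm_id (m k : nat) : {set 'S_m} :=
  [set s : 'S_m | grassmannian s && avoids s (id_perm k)].

Definition catalan (n : nat) : nat := 'C(2 * n, n) %/ n.+1.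

From mathcomp Require Import all_boot all_order all_fingroup zify.
Set Implicit Arguments. Unset Strict Implicit. Unset Printing Implicit Defensive.

(* A Grassmannian permutation is the concatenation of two increasing runs, so it
   is determined by the set of values of its first run; we encode it by a binary
   word, reading the values from the largest down. Every Grassmannian permutation
   has exactly one canonical code, and the identity of size m has m further ones.
   A new maximum put at the end of the first run, resp. of the second run, turns
   the length lis of the longest increasing subsequence into
   max(lis, #first run + 1), resp. lis + 1. Counting the words with lis < k is
   therefore a ballot problem, with answer C_(k+1) - 1 summed over all lengths;
   the non-canonical codes of the identities of sizes m < k account for
   binom(k, 2). Both runs are increasing, so lis >= m / 2, and no code of length
   m >= 2k - 1 has lis < k. *)

(** * Increasing subsequences and descents *)

Definition incr_subseq (s : seq nat) (k : nat) : Prop :=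
  exists t, [/\ subseq t s, sorted ltn t & size t = k].

Lemma incr_subseq0 s : incr_subseq s 0.
Proof. by exists [::]; rewrite sub0seq. Qed.

Lemma incr_subseq_leq s k j : j <= k -> incr_subseq s k -> incr_subseq s j.
Proof.
move=> jk [t [ts sot szt]]; exists (take j t); split.
- exact: subseq_trans (take_subseq _ _) ts.
- exact: (subseq_sorted ltn_trans (take_subseq _ _) sot).
- by rewrite size_take_min szt; apply/minn_idPl.
Qed.

Lemma incr_subseq_size s k : incr_subseq s k -> k <= size s.
Proof. by move=> [t [ts _ <-]]; apply: size_subseq. Qed.

Lemma sorted_rcons_ltn (s : seq nat) x :
  sorted ltn s -> {in s, forall y, y < x} -> sorted ltn (rcons s x).
Proof. by case: s => //= a s so lt; rewrite rcons_path so /= lt ?mem_last. Qed.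

Lemma incr_subseq_rcons s x k : uniq (rcons s x) -> {in s, forall y, y < x} ->
  incr_subseq (rcons s x) k.+1 <-> incr_subseq s k.
Proof.
move=> un lt; split=> [[t [ts sot szt]] | [t [ts sot szt]]]; last first.
  exists (rcons t x); split; first by rewrite -!cats1 subseq_cat2r.
  - by apply: sorted_rcons_ltn => // y /(mem_subseq ts); apply: lt.
  - by rewrite size_rcons szt.
have := ts; move/(subseq_uniqP un); rewrite filter_rcons.
case: ifP => xt; last first.
  move=> et; apply: (incr_subseq_leq (leqnSn k)).
  by exists t; split=> //; rewrite et filter_subseq.
have Fs := filter_subseq [in t] s; move: (filter _ s) Fs => F Fs et.
exists F; split => //; last by move: szt; rewrite et size_rcons => -[].
by apply: (subseq_sorted ltn_trans _ sot); rewrite et subseq_rcons.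
Qed.

(* An increasing subsequence through the maximum [x] ends there, since
   everything after [x] is smaller. *)
Lemma incr_subseq_mid s r x k : uniq (s ++ x :: r) -> sorted ltn s ->
  {in s ++ r, forall y, y < x} ->
  incr_subseq (s ++ x :: r) k <-> incr_subseq (s ++ r) k \/ k <= (size s).+1.
Proof.
move=> un sos lt; split=> [[t [ts sot szt]] | [[t [ts sot szt]] | ks]].
- have := ts; move/(subseq_uniqP un); rewrite filter_cat /=.
  have Fs := filter_subseq [in t] s; have Fr := filter_subseq [in t] r.
  move: (filter _ s) (filter _ r) Fs Fr => Fs Fr sFs sFr.
  case: ifP => xt et; last by left; exists t; split=> //; rewrite et cat_subseq.
  right; case: Fr sFr et => [|y Fr] sFr et.
    by rewrite -szt et size_cat addn1 ltnS size_subseq.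
  have yr : y \in r by apply: (mem_subseq sFr); rewrite mem_head.
  have : sorted ltn [:: x, y & Fr].
    by apply: (subseq_sorted ltn_trans _ sot); rewrite et suffix_subseq.
  case/andP=> xy _; have := lt y; rewrite mem_cat yr orbT => /(_ isT).
  by rewrite ltnNge ltnW.
- exists t; split=> //; apply: subseq_trans ts _.
  by rewrite cat_subseq ?subseq_refl ?subseq_cons.
- apply: incr_subseq_leq ks _; exists (rcons s x); split.
  + by rewrite -cat_rcons prefix_subseq.
  + by apply: sorted_rcons_ltn => // y ys; apply: lt; rewrite mem_cat ys.
  + by rewrite size_rcons.
Qed.

Definition ndesc (w : seq nat) : nat :=
  count (fun i => nth 0 w i.+1 < nth 0 w i) (iota 0 (size w).-1).

Lemma ndesc_cons2 x y w : ndesc [:: x, y & w] = (y < x) + ndesc (y :: w).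
Proof. by rewrite /ndesc /= (iotaDl 1 0) count_map. Qed.

Lemma ndesc_eq0 w : (ndesc w == 0) = sorted leq w.
Proof.
elim: w => [|x [|y w] IH] //.
by rewrite ndesc_cons2 /= -[path leq y w]/(sorted leq (y :: w)) -IH ltnNge; case: leqP.
Qed.

Lemma ndesc_cat_sorted s r : sorted leq s -> sorted leq r -> ndesc (s ++ r) <= 1.
Proof.
elim: s => [|x [|y s] IH] /= sos sor.
- by move: sor; rewrite -ndesc_eq0 => /eqP ->.
- clear IH; case: r sor => [//|z r] sor; rewrite ndesc_cons2.
  by move: sor; rewrite -ndesc_eq0 => /eqP ->; case: ltnP.
- by case/andP: sos => xy sos; rewrite ndesc_cons2 ltnNge xy IH.
Qed.

Lemma ndesc_le1_split w : ndesc w <= 1 ->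
  exists s r, [/\ w = s ++ r, sorted leq s & sorted leq r].
Proof.
elim: w => [|x [|y w] IH]; first by exists [::], [::].
  by exists [:: x], [::].
rewrite ndesc_cons2; case: ltnP => yx /= h.
  by exists [:: x], (y :: w); split=> //; rewrite -ndesc_eq0; lia.
have [[|a s] [r [e sos sor]]] := IH h.
  by exists [:: x, y & w], [::]; rewrite cats0 /= yx -[path _ _ _]/(sorted leq (y :: w)) e.
by exists [:: x, a & s], r; case: e sos => <- -> /= ->; rewrite yx.
Qed.

Lemma sorted_ltn_subseq_iota n (p : seq nat) :
  sorted ltn p -> {subset p <= gtn n} -> subseq p (iota 0 n).
Proof.
move=> sop ltp; have -> : p = filter [in p] (iota 0 n).
  apply: (irr_sorted_eq ltn_trans ltnn sop).
    exact: (sorted_filter ltn_trans _ (iota_ltn_sorted 0 n)).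
  move=> i; rewrite mem_filter mem_iota add0n.
  by apply/idP/andP=> [ip | []//]; split=> //; apply: ltp.
exact: filter_subseq.
Qed.

Lemma ltn_nth_sorted (t : seq nat) a b : sorted ltn t -> a < size t -> b < size t ->
  (nth 0 t a < nth 0 t b) = (a < b).
Proof.
move=> sot ha hb; have mono := sorted_ltn_nth ltn_trans 0 sot.
case: (ltngtP a b) => [ab|ba|->]; last exact: ltnn.
- by rewrite mono ?inE.
- by apply/negbTE; rewrite -leqNgt ltnW // mono ?inE.
Qed.

Lemma incr_subseq_nth w k : incr_subseq w k <->
  exists p, [/\ sorted ltn p, {subset p <= gtn (size w)}, size p = k
              & sorted ltn [seq nth 0 w i | i <- p]].
Proof.
have ew : w = [seq nth 0 w i | i <- iota 0 (size w)] by rewrite -/(mkseq _ _) mkseq_nth.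
split=> [[t [/subseqP [msk szm et] sot szt]] | [p [sop ltp szp sowp]]].
- exists (mask msk (iota 0 (size w))); split.
  + exact: (sorted_mask ltn_trans _ (iota_ltn_sorted 0 _)).
  + by move=> i /mem_mask; rewrite mem_iota.
  + by rewrite -szt et !size_mask ?size_iota.
  + by rewrite map_mask -ew -et.
- exists [seq nth 0 w i | i <- p]; rewrite size_map szp; split=> //.
  by rewrite [X in subseq _ X]ew map_subseq ?sorted_ltn_subseq_iota.
Qed.

Lemma sorted_cat_ltn_prefix (s r s' r' : seq nat) : sorted ltn s' -> sorted ltn r ->
  s ++ r = s' ++ r' -> size s < size s' -> sorted ltn (s ++ r).
Proof.
move=> sos' sor e lt; case: r sor e => [|x t] sor e.
  by have := congr1 size e; rewrite cats0 size_cat; lia.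
rewrite sorted_cat_cons; apply/andP; split=> //.
have -> : rcons s x = take (size s).+1 (s ++ x :: t).
  by rewrite take_cat ltnNge leqnSn subSnn /= take0 cats1.
rewrite e takel_cat //.
exact: (subseq_sorted ltn_trans (take_subseq _ _) sos').
Qed.

Lemma count_andC T (a b : pred T) s :
  count (fun x => a x && b x) s + count (fun x => a x && ~~ b x) s = count a s.
Proof. by elim: s => //= x s IH; case: (a x); case: (b x) => /=; lia. Qed.

Lemma size_oneline m (s : 'S_m) : size (oneline s) = m.
Proof. by rewrite size_map size_enum_ord. Qed.

Lemma nth_oneline m (s : 'S_m) (i : 'I_m) : nth 0 (oneline s) i = s i.
Proof. by rewrite (nth_map i) ?size_enum_ord // nth_ord_enum. Qed.

Lemma oneline_inj m : injective (@oneline m).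
Proof. by move=> s s' e; apply/permP => i; apply: val_inj; rewrite /= -!nth_oneline e. Qed.

Lemma uniq_oneline m (s : 'S_m) : uniq (oneline s).
Proof. by rewrite map_inj_uniq ?enum_uniq // => i j /val_inj /perm_inj. Qed.

Lemma mem_oneline m (s : 'S_m) v : (v \in oneline s) = (v < m).
Proof.
apply/mapP/idP => [[i _ ->] // | vm]; first exact: ltn_ord.
by exists ((s^-1)%g (Ordinal vm)); rewrite ?mem_enum ?permKV.
Qed.

Lemma ndes_oneline m (s : 'S_m) : ndes s = ndesc (oneline s).
Proof. by rewrite /ndes /ndesc size_oneline. Qed.

Lemma sorted_enum_ord n : sorted (relpre val ltn) (enum 'I_n).
Proof. by rewrite -sorted_map val_enum_ord iota_ltn_sorted. Qed.

Lemma contains_id_incr_subseq m k (s : 'S_m) :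
  contains s (id_perm k) <-> incr_subseq (oneline s) k.
Proof.
rewrite incr_subseq_nth size_oneline.
split=> [/existsP [f /forallP fP] | [p [sop ltp szp sosp]]].
- have mono (a b : 'I_k) : a < b -> f a < f b /\ s (f a) < s (f b).
    move=> ab; have /forallP/(_ b)/andP[/implyP/(_ ab) -> /eqP ->] := fP a.
    by rewrite !perm1.
  exists [seq val (f a) | a <- enum 'I_k]; rewrite size_map size_enum_ord; split=> //.
  + by rewrite sorted_map; apply: sub_sorted (sorted_enum_ord k) => a b /mono[].
  + by move=> _ /mapP [a _ ->]; apply: ltn_ord.
  + rewrite -map_comp sorted_map; apply: sub_sorted (sorted_enum_ord k) => a b /mono[_].
    by rewrite /= !nth_oneline.
- have ltp' (a : 'I_k) : nth 0 p a < m by apply: ltp; rewrite mem_nth ?szp.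
  have sp (a : 'I_k) :
      s (Ordinal (ltp' a)) = nth 0 [seq nth 0 (oneline s) i | i <- p] a :> nat.
    by rewrite (nth_map 0) ?szp // -nth_oneline.
  apply/existsP; exists [ffun a => Ordinal (ltp' a)].
  apply/forallP => a; apply/forallP => b; rewrite !ffunE /= !perm1 !sp.
  by rewrite !ltn_nth_sorted ?size_map ?szp // implybb eqxx.
Qed.

(** * Grassmannian permutations as binary words *)

(* A word [u] records, for each value from [size u - 1] down to [0], whether it
   lies in the first increasing run ([true]) or in the second one ([false]). *)
Fixpoint runA (u : seq bool) : seq nat :=
  if u is b :: u' then if b then rcons (runA u') (size u') else runA u' else [::].

Fixpoint runB (u : seq bool) : seq nat :=
  if u is b :: u' then if b then runB u' else rcons (runB u') (size u') else [::].

Definition runs (u : seq bool) : seq nat := runA u ++ runB u.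

Lemma perm_runs_cons b u : perm_eq (runs (b :: u)) (size u :: runs u).
Proof.
rewrite /runs /=; case: b.
- by rewrite cat_rcons; apply/permEl/(perm_catCA _ [:: _]).
- by rewrite -rcons_cat; apply/permEl/perm_rcons.
Qed.

Lemma mem_runs u v : (v \in runs u) = (v < size u).
Proof.
elim: u => [|b u IH] //=.
by rewrite (perm_mem (perm_runs_cons b u)) in_cons IH ltnS [RHS]leq_eqVlt.
Qed.

Lemma uniq_runs u : uniq (runs u).
Proof.
elim: u => [|b u IH] //=.
by rewrite (perm_uniq (perm_runs_cons b u)) /= mem_runs ltnn IH.
Qed.

Lemma size_runs u : size (runs u) = size u.
Proof. by elim: u => [|b u IH] //=; rewrite (perm_size (perm_runs_cons b u)) /= IH. Qed.

Lemma size_runA u : size (runA u) = count id u.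
Proof. by elim: u => [|[] u IH] //=; rewrite size_rcons IH. Qed.

Lemma sorted_runA u : sorted ltn (runA u).
Proof.
elim: u => [|[] u IH] //=; apply: sorted_rcons_ltn => // v vA.
by rewrite -mem_runs mem_cat vA.
Qed.

Lemma sorted_runB u : sorted ltn (runB u).
Proof.
elim: u => [|[] u IH] //=; apply: sorted_rcons_ltn => // v vB.
by rewrite -mem_runs mem_cat vB orbT.
Qed.

(* A new maximum appended to the first run extends only the increasing
   subsequences inside that run; appended to the second run, it extends all. *)
Fixpoint lis_word (u : seq bool) : nat :=
  if u is b :: u' then
    if b then maxn (lis_word u') (count id u').+1 else (lis_word u').+1
  else 0.

Lemma incr_subseq_runs u k : incr_subseq (runs u) k <-> k <= lis_word u.
Proof.
elim: u k => [|[] u IH] k /=.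
- split=> [/incr_subseq_size | ]; first by [].
  by rewrite leqn0 => /eqP ->; apply: incr_subseq0.
- have un := uniq_runs (true :: u); rewrite /runs /= cat_rcons in un *.
  rewrite incr_subseq_mid ?sorted_runA //; last by move=> v; rewrite mem_runs.
  by rewrite IH size_runA leq_max; apply: rwP orP.
- have un := uniq_runs (false :: u); rewrite /runs /= -rcons_cat in un *.
  case: k => [|k]; first by split=> // _; apply: incr_subseq0.
  by rewrite incr_subseq_rcons ?IH // => v; rewrite mem_runs.
Qed.

Lemma count_le_lis u : count id u <= lis_word u.
Proof. by elim: u => [|[] u IH] //=; lia. Qed.

Lemma countN_le_lis u : count negb u <= lis_word u.
Proof. by elim: u => [|[] u IH] //=; lia. Qed.

Lemma lis_le_size u : lis_word u <= size u.
Proof. by elim: u => [|[] u IH] //=; have := count_size id u; lia. Qed.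

Lemma size_le_double_lis u : size u <= 2 * lis_word u.
Proof.
have := count_predC id u; have := count_le_lis u; have := countN_le_lis u.
by rewrite (eq_count (a1 := predC id) (a2 := negb)) //; lia.
Qed.

Definition code (P : pred nat) (m : nat) : seq bool := [seq P v | v <- rev (iota 0 m)].

Lemma codeS P m : code P m.+1 = P m :: code P m.
Proof. by rewrite /code -addn1 iotaD cats1 rev_rcons. Qed.

Lemma size_code P m : size (code P m) = m.
Proof. by rewrite size_map size_rev size_iota. Qed.

Lemma runA_code P m : runA (code P m) = filter P (iota 0 m).
Proof.
elim: m => [|m IH] //; rewrite codeS -addn1 iotaD filter_cat /= size_code IH.
by case: (P m); rewrite ?cats0 ?cats1.
Qed.

Lemma runB_code P m : runB (code P m) = filter (predC P) (iota 0 m).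
Proof.
elim: m => [|m IH] //; rewrite codeS -addn1 iotaD filter_cat /= size_code IH.
by case: (P m); rewrite ?cats0 ?cats1.
Qed.

Lemma code_runA u : code [in runA u] (size u) = u.
Proof.
elim: u => [|b u IH] //; rewrite codeS -[in RHS]IH.
have uA : size u \notin runA u.
  by apply/negP => uA; have := mem_runs u (size u); rewrite mem_cat uA ltnn.
congr (_ :: _); first by case: b; rewrite /= ?mem_rcons ?inE ?eqxx ?(negbTE uA).
apply/eq_in_map => v; rewrite mem_rev mem_iota /= => vu.
by case: b; rewrite /= ?mem_rcons ?inE ?(ltn_eqF vu).
Qed.

Lemma runs_code s r m : sorted ltn s -> sorted ltn r -> uniq (s ++ r) ->
  (forall v, (v \in s ++ r) = (v < m)) ->
  runA (code [in s] m) = s /\ runB (code [in s] m) = r.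
Proof.
move=> sos sor un mem_sr; rewrite runA_code runB_code.
have sorted_filter_iota P := sorted_filter ltn_trans P (iota_ltn_sorted 0 m).
split; apply: (irr_sorted_eq ltn_trans ltnn) => // v.
all: rewrite mem_filter mem_iota /= -mem_sr mem_cat.
- by case: (v \in s).
- move: un; rewrite cat_uniq => /and3P [_ /hasPn/(_ v) + _].
  by case: (v \in r); case: (v \in s) => // /(_ isT).
Qed.

(* The identity permutation of size [m] is [runs u] for the [m + 1] words
   [nseq j false ++ nseq (m - j) true]; only [nseq m false] is canonical. *)
Definition canonical (u : seq bool) : bool :=
  (runA u == [::]) || ~~ sorted ltn (runs u).


Lemma canonical_runs_inj u v : canonical u -> canonical v ->
  size u = size v -> runs u = runs v -> u = v.
Proof.
wlog le_uv : u v / size (runA u) <= size (runA v).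
  move=> wlog_uv cu cv suv e; have [le|/ltnW le] := leqP (size (runA u)) (size (runA v)).
    exact: wlog_uv.
  exact/esym/wlog_uv.
move=> cu cv suv e; rewrite -(code_runA u) -(code_runA v) suv.
case: ltngtP le_uv => // [lt _ | eq_size _]; last first.
  by rewrite -(take_size_cat (runB u) eq_size) [_ ++ _]e take_size_cat.
have so : sorted ltn (runs v).
  by rewrite -e (sorted_cat_ltn_prefix (sorted_runA v) (sorted_runB u) e).
by move: cv lt; rewrite /canonical so orbF => /eqP ->.
Qed.

Fixpoint words (m : nat) : seq (seq bool) :=
  if m is m'.+1 then map (cons true) (words m') ++ map (cons false) (words m')
  else [:: [::]].

Lemma mem_words m u : (u \in words m) = (size u == m).
Proof.
have cons_inj (b : bool) : injective (cons b) by move=> x y [].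
elim: m u => [|m IH] [|[] u] //=; rewrite mem_cat.
- by apply/negP => /orP[] /mapP[].
- by rewrite (mem_map (cons_inj true)) IH; case: mapP => [[w _ []] | _]; rewrite ?orbF.
- by rewrite (mem_map (cons_inj false)) IH; case: mapP => [[w _ []] | _].
Qed.

Lemma uniq_words m : uniq (words m).
Proof.
have cons_inj (b : bool) : injective (cons b) by move=> x y [].
elim: m => [|m IH] //=; rewrite cat_uniq !map_inj_uniq ?IH //=.
rewrite andbT; apply/hasPn => _ /mapP [u _ ->]; by apply/mapP => -[].
Qed.

Definition perm_of_seq m (w : seq nat) : 'S_m := odflt 1%g [pick s : 'S_m | oneline s == w].

Lemma oneline_perm_of_seq m w : uniq w -> size w = m -> {in w, forall v, v < m} ->
  oneline (perm_of_seq m w) = w.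
Proof.
move=> un sz lt; rewrite /perm_of_seq; case: pickP => [s /eqP // | no_perm].
have ltw (i : 'I_m) : nth 0 w i < m by apply: lt; rewrite mem_nth ?sz.
have inj : injective (fun i => Ordinal (ltw i)).
  by move=> i j [] /eqP; rewrite nth_uniq ?sz // => /eqP /val_inj.
have /eqP[] := no_perm (perm inj); rewrite /oneline.
under eq_map => i do rewrite permE /=.
by rewrite (map_comp (nth 0 w) val) val_enum_ord -sz -/(mkseq _ _) mkseq_nth.
Qed.

Lemma grassmannian_runs m (s : 'S_m) : grassmannian s ->
  exists u, [/\ canonical u, size u = m & runs u = oneline s].
Proof.
rewrite /grassmannian ndes_oneline => /ndesc_le1_split [s1 [r1 [e sos1 sor1]]].
have [a [b [eab soa sob a0]]] : exists a b, [/\ oneline s = a ++ b, sorted ltn a,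
    sorted ltn b & sorted ltn (oneline s) -> a = [::]].
  case: (boolP (sorted ltn (oneline s))) => so; first by exists [::], (oneline s).
  have := uniq_oneline s; rewrite e cat_uniq => /and3P [u1 _ u2].
  by exists s1, r1; rewrite !ltn_sorted_uniq_leq u1 u2 sos1 sor1; split=> // /(negP so).
have [eA eB] : runA (code [in a] m) = a /\ runB (code [in a] m) = b.
  by apply: runs_code => // [|v]; rewrite -eab ?uniq_oneline ?mem_oneline.
exists (code [in a] m); rewrite size_code /canonical /runs eA eB -eab; split=> //.
by case: (boolP (sorted ltn (oneline s))) => [/a0 -> | _]; rewrite ?orbT.
Qed.

Lemma grassmannian_oneline_runs m (s : 'S_m) u : oneline s = runs u -> grassmannian s.
Proof.
rewrite /grassmannian ndes_oneline => ->.
by apply: ndesc_cat_sorted; [apply: sub_sorted (sorted_runA u) |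
  apply: sub_sorted (sorted_runB u)]; move=> x y /ltnW.
Qed.

Lemma avoids_id_runs m k (s : 'S_m) u : oneline s = runs u ->
  avoids s (id_perm k) = (lis_word u < k).
Proof.
move=> su; rewrite /avoids ltnNge; congr (~~ _); apply/idP/idP.
- by move/contains_id_incr_subseq; rewrite su => /incr_subseq_runs.
- by move/incr_subseq_runs; rewrite -su => /contains_id_incr_subseq.
Qed.

Lemma card_Gm_id m k :
  #|Gm_id m k| = count (fun u => (lis_word u < k) && canonical u) (words m).
Proof.
set W := [seq u <- words m | (lis_word u < k) && canonical u].
pose perm_of u := perm_of_seq m (runs u).
have oneline_of u : size u = m -> oneline (perm_of u) = runs u.
  move=> su; apply: oneline_perm_of_seq; rewrite ?uniq_runs ?size_runs //.
  by move=> v; rewrite mem_runs su.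
have GmE : Gm_id m k =i map perm_of W.
  move=> s; rewrite inE; apply/andP/mapP => [[/grassmannian_runs [u [cu su es]] av] | [u]].
    exists u; last by apply: oneline_inj; rewrite oneline_of.
    by rewrite mem_filter mem_words su eqxx cu !andbT -(avoids_id_runs k (esym es)).
  rewrite mem_filter mem_words => /andP[/andP[lt _] /eqP su] ->.
  rewrite (avoids_id_runs _ (oneline_of u su)); split=> //.
  exact: grassmannian_oneline_runs (oneline_of u su).
have uniq_W : uniq (map perm_of W).
  rewrite map_inj_in_uniq ?filter_uniq ?uniq_words // => u v.
  rewrite !mem_filter !mem_words => /andP[/andP[_ cu] /eqP su] /andP[/andP[_ cv] /eqP sv] e.
  by apply: canonical_runs_inj; rewrite -?oneline_of ?e ?su ?sv.
by rewrite (eq_card GmE) (card_uniqP uniq_W) size_map size_filter.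
Qed.

(** * Counting words by their longest increasing subsequence *)

Lemma count_wordsS (p : pred (seq bool)) m : count p (words m.+1) =
  count (fun u => p (true :: u)) (words m) + count (fun u => p (false :: u)) (words m).
Proof. by rewrite /= count_cat !count_map. Qed.

Lemma runB_eq_nil u : (runB u == [::]) = all id u.
Proof. by elim: u => [|[] u IH] //=; case: (runB u). Qed.

Lemma count_all_true m : count (all id) (words m) = 1.
Proof.
elim: m => [|m IH] //; rewrite count_wordsS IH.
by rewrite (eq_count (a2 := pred0)) ?count_pred0.
Qed.

Lemma noncanonical_true u : ~~ canonical (true :: u) = all id u.
Proof.
rewrite /canonical /runs /= negb_or negbK -runB_eq_nil.
have -> : (rcons (runA u) (size u) == [::]) = false by case: (runA u).
rewrite /= cat_rcons sorted_cat_cons sorted_rcons_ltn ?sorted_runA //=; last first.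
  by move=> v vA; rewrite -mem_runs mem_cat vA.
have ltB : {in runB u, forall v, v < size u}.
  by move=> v vB; rewrite -mem_runs mem_cat vB orbT.
case: (runB u) ltB => [|v B] //= ltB; apply/negbTE.
by rewrite negb_and -leqNgt ltnW ?ltB ?mem_head.
Qed.

Lemma noncanonical_false u : ~~ canonical (false :: u) = ~~ canonical u.
Proof.
rewrite /canonical /runs /= -rcons_cat; congr (~~ (_ || ~~ _)).
apply/idP/idP => [|so]; first exact/subseq_sorted/subseq_rcons/ltn_trans.
by apply: sorted_rcons_ltn => // v; rewrite mem_runs.
Qed.

Lemma count_noncanonical m : count (fun u => ~~ canonical u) (words m) = m.
Proof.
elim: m => [|m IH] //; rewrite count_wordsS.
under eq_count => u do rewrite noncanonical_true.
by under [X in _ + X]eq_count => u do rewrite noncanonical_false; rewrite count_all_true IH.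
Qed.

Lemma lis_noncanonical u : ~~ canonical u -> lis_word u = size u.
Proof.
rewrite /canonical negb_or negbK => /andP[_ so].
apply/eqP; rewrite eqn_leq lis_le_size -incr_subseq_runs.
by exists (runs u); rewrite subseq_refl size_runs.
Qed.

Lemma count_lis_noncanonical m k :
  count (fun u => (lis_word u < k) && ~~ canonical u) (words m) = (m < k) * m.
Proof.
rewrite (eq_in_count (a2 := fun u => (m < k) && ~~ canonical u)); last first.
  move=> u; rewrite mem_words => /eqP su.
  by case: (boolP (canonical u)) => cu; rewrite ?andbF ?lis_noncanonical ?su.
case: (m < k); rewrite ?mul1n ?mul0n ?count_noncanonical //.
exact: count_pred0.
Qed.

(* [lis_shift d u] is [lis_word (nseq d true ++ u)]; by the recursion of
   [lis_word], counting words by it is a ballot problem. *)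
Definition lis_shift (d : nat) (u : seq bool) : nat := maxn (lis_word u) (d + count id u).

Definition nbounded (L n d : nat) : nat :=
  \sum_(0 <= m < L) count (fun u => lis_shift d u <= n) (words m).

Lemma lis_shift0 u : lis_shift 0 u = lis_word u.
Proof. exact/maxn_idPl/count_le_lis. Qed.

Lemma lis_shift_true d u : lis_shift d (true :: u) = lis_shift d.+1 u.
Proof. by rewrite /lis_shift /=; have := count_le_lis u; lia. Qed.

Lemma lis_shift_false d u : lis_shift d (false :: u) = (lis_shift d.-1 u).+1.
Proof. by rewrite /lis_shift /=; have := count_le_lis u; lia. Qed.

Lemma nbounded_lt L n d : n < d -> nbounded L n d = 0.
Proof.
move=> lt_nd; rewrite /nbounded big1 // => m _.
rewrite (eq_count (a2 := pred0)) ?count_pred0 // => u.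
by apply/negbTE; rewrite -ltnNge /lis_shift; lia.
Qed.

Lemma nboundedS L n d : nbounded L.+1 n d =
  (d <= n) + nbounded L n d.+1 + (if n is n'.+1 then nbounded L n' d.-1 else 0).
Proof.
rewrite /nbounded big_nat_recl //= (_ : lis_shift d [::] = d); last first.
  by rewrite /lis_shift /= addn0 max0n.
rewrite addn0 -addnA; congr (_ + _).
case: n => [|n]; rewrite ?addn0 -?big_split; apply: eq_bigr => m _; rewrite count_wordsS.
- rewrite [X in _ + X](eq_count (a2 := pred0)) ?count_pred0 ?addn0.
    by apply: eq_count => u; rewrite /= lis_shift_true.
  by move=> u; rewrite /= lis_shift_false.
- by congr (_ + _); apply: eq_count => u; rewrite /= ?lis_shift_true ?lis_shift_false.
Qed.

(* No word longer than [d + 2 e] is counted, whence the condition on [L]. *)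
Lemma nbounded_closed L n d e : n = d + e -> d + 2 * e < L ->
  nbounded L n d + 1 + 'C(d + 2 * e + 3, e) = 'C(d + 2 * e + 3, e.+1).
Proof.
elim: L n d e => [//|L IH] n d e -> lt_L; rewrite nboundedS.
case: e lt_L => [|e] lt_L; case: d lt_L => [|d] lt_L /=.
- by rewrite nbounded_lt.
- rewrite !addn0 (nbounded_lt _ (ltnSn d.+1)).
  have := IH d d 0 (esym (addn0 d)) ltac:(lia); rewrite !addn0 !bin0 !bin1; lia.
- have IH0 := IH e 0 e (esym (add0n e)) ltac:(lia).
  have IH1 := IH e.+1 1 e (add1n e) ltac:(lia).
  move: IH0 IH1; rewrite !add0n (_ : 1 + 2 * e + 3 = (2 * e + 3).+1); last lia.
  rewrite (_ : 2 * e.+1 + 3 = (2 * e + 3).+2); last lia.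
  have sym : 'C(2 * e + 3, e.+2) = 'C(2 * e + 3, e.+1).
    by rewrite -bin_sub; [congr 'C(_, _) | ]; lia.
  rewrite !binS sym; lia.
- have IH0 := IH (d + e.+1) d e.+1 erefl ltac:(lia).
  have IH1 := IH (d.+1 + e.+1) d.+2 e ltac:(lia) ltac:(lia).
  move: IH0 IH1; rewrite (_ : d.+2 + 2 * e + 3 = d + 2 * e.+1 + 3); last lia.
  rewrite (_ : d.+1 + 2 * e.+1 + 3 = (d + 2 * e.+1 + 3).+1); last lia.
  rewrite leq_addr !binS; lia.
Qed.

Lemma catalanE n : catalan n = 'C(2 * n, n) - 'C(2 * n, n.+1).
Proof.
have e : 'C(2 * n, n) = n.+1 * ('C(2 * n, n) - 'C(2 * n, n.+1)).
  rewrite mulnBr mul_bin_left (_ : 2 * n - n = n); last lia.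
  by rewrite mulSn addnK.
by rewrite /catalan {1}e mulKn.
Qed.

Lemma catalanSS n : catalan n.+2 = 'C(2 * n + 3, n.+1) - 'C(2 * n + 3, n).
Proof.
rewrite catalanE (_ : 2 * n.+2 = (2 * n + 3).+1) ?binS; last lia.
have sym m : m <= n.+1 -> 'C(2 * n + 3, (2 * n + 3) - m) = 'C(2 * n + 3, m).
  by move=> le_m; rewrite bin_sub //; lia.
have -> : 'C(2 * n + 3, n.+2) = 'C(2 * n + 3, n.+1).
  by rewrite -(sym n.+1) //; congr binomial; lia.
have -> : 'C(2 * n + 3, n.+3) = 'C(2 * n + 3, n).
  by rewrite -(sym n) //; congr binomial; lia.
lia.
Qed.

Lemma sum_small_sizes n L : n <= L -> \sum_(0 <= m < L) (m < n) * m = 'C(n, 2).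
Proof.
move=> le_nL; rewrite (@big_cat_nat _ _ _ n) //= -bin2_sum.
rewrite [X in _ + X]big_nat_cond [X in _ + X]big1 ?addn0 => [|m]; last first.
  by rewrite andbT => /andP[le_nm _]; rewrite ltnNge le_nm.
by apply: eq_big_nat => m /andP[_ ->]; rewrite mul1n.
Qed.


Theorem corollary3p8 (k : nat) (hk : 1 <= k) :
  \sum_(0 <= m < (2 * k - 2).+1) #|Gm_id m k| = catalan k.+1 - 'C(k, 2) - 1
  /\ (forall m : nat, 2 * k - 1 <= m -> #|Gm_id m k| = 0).
Proof.
split; last first.
  move=> m le_m; rewrite card_Gm_id (eq_in_count (a2 := pred0)) ?count_pred0 // => u.
  rewrite mem_words => /eqP su /=; have := size_le_double_lis u.
  rewrite su => le_2lis; apply/negbTE; rewrite negb_and -leqNgt; apply/orP; left; lia.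
case: k hk => [//|k] _.
have count_m m : count (fun u => lis_shift 0 u <= k) (words m) =
    #|Gm_id m k.+1| + (m < k.+1) * m.
  rewrite card_Gm_id -count_lis_noncanonical count_andC.
  by apply: eq_count => u; rewrite lis_shift0.
have := nbounded_closed (esym (add0n k)) (ltnSn (2 * k)).
rewrite /nbounded (eq_bigr _ (fun m _ => count_m m)) big_split /= sum_small_sizes; last lia.
rewrite catalanSS (_ : (2 * k.+1 - 2).+1 = (2 * k).+1) ?add0n; lia.
Qed.
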